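(* For $p_1,\dots,p_n\in[0,1]$, the tuple $(B_{p_1},\dots,B_{p_n})$ is jointly mixable if and only if $\sum_{i=1}^n p_i$ is an integer.
   Context: Work on an atomless probability space. $B_p$ denotes the Bernoulli distribution with mean $p$. An $n$-tuple of cdfs $\mathbf F=(F_1,\dots,F_n)$ is jointly mixable if the set $\{\text{cdf of }X_1+\dots+X_n:X_i\sim F_i\}$ contains a point mass $\delta_x$ for some $x\in\mathbb{R}$ (equivalently, there exist $X_i\sim F_i$ with $X_1+\dots+X_n$ almost surely constant). *)

From HB Require Import structures.
From mathcomp Require Import all_boot all_order all_algebra.
From mathcomp Require Import all_classical all_reals all_analysis.
Set Implicit Arguments. Unset Strict Implicit. Unset Printing Implicit Defensive.
Import Order.TTheory GRing.Theory Num.Theory.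
Local Open Scope classical_set_scope.
Local Open Scope ring_scope.

Definition atomless d (T : measurableType d) (R : realType) (P : probability T R) : Prop :=
  forall A : set T, measurable A -> (0 < P A)%E ->
    exists B : set T, [/\ measurable B, B `<=` A & (0 < P B < P A)%E].

Definition bernoulli_cdf (R : realType) (p : R) (x : R) : R :=
  if x < 0 then 0 else if x < 1 then 1 - p else 1.

Definition jointly_mixable d (T : measurableType d) (R : realType)
  (P : probability T R) (n : nat) (F : 'I_n -> R -> R) : Prop :=
  exists X : 'I_n -> {RV P >-> R},
    (forall i x, cdf (X i) x = (F i x)%:E) /\
    exists c : R, P [set w | \sum_(i < n) X i w = c] = 1%E.

(* A random variable with cdf B_p is almost surely 0 or 1, hence almost surely
   the indicator of an event of probability p.  If the X_i sum to a constant c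
   almost surely, evaluating at one point shows that c is an integer, and
   integrating the sum of the indicators gives c = p_1 + ... + p_n.

   Conversely, in an atomless space every value in [0, P E] is the probability
   of a measurable subset of E (Sierpinski).  Hence two probabilities x, y are
   carried by events whose indicators sum to the indicator of an event of
   probability x + y, or to 1 plus the indicator of an event of probability
   x + y - 1 when x + y > 1.  Merging the first two p_i this way and inducting
   on n gives events A_i with P A_i = p_i whose indicators sum to k at every
   point; these indicators are the required Bernoulli variables. *)

From HB Require Import structures.
From mathcomp Require Import all_boot all_order all_algebra.
From mathcomp Require Import all_classical all_reals all_analysis.
From mathcomp Require Import measurable_realfun.
From mathcomp Require Import ring lra zify.
Set Implicit Arguments.
Unset Strict Implicit.
Unset Printing Implicit Defensive.
Import Order.TTheory GRing.Theory Num.Theory.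
Local Open Scope classical_set_scope.
Local Open Scope ring_scope.

Lemma eq0_or_eq1_of_notin (R : realType) (x : R) :
  (forall m : nat, x \notin `]-oo, - m.+1%:R^-1]) ->
  (forall m : nat, x \notin `]0, 1 - m.+1%:R^-1]) ->
  x \notin `]1, +oo[ -> x = 0 \/ x = 1.
Proof.
move=> not_neg not_mid; rewrite in_itv /= andbT -leNgt => x_le1.
have [x_lt0|x_ge0] := ltP x 0.
  have [m xm] := ltr_add_invr x_lt0.
  (* naming the inverse lets lra identify its occurrences, whose instance
     paths differ *)
  move: (not_neg m) xm; rewrite in_itv /= -ltNge; set u := _^-1.
  by move=> ? ?; exfalso; lra.
have [x_le0|x_gt0] := leP x 0; first by left; apply/eqP; rewrite eq_le x_le0.
have [x_lt1|x_ge1] := ltP x 1; last by right; apply/eqP; rewrite eq_le x_le1.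
have [m xm] := ltr_add_invr x_lt1.
move: (not_mid m) xm; rewrite in_itv /= x_gt0 /= -ltNge; set u := _^-1.
by move=> ? ?; exfalso; lra.
Qed.

Lemma sum01_nat (R : nzRingType) (I : finType) (x : I -> R) :
  (forall i, x i = 0 \/ x i = 1) -> exists k : nat, \sum_i x i = k%:R.
Proof.
move=> x01; exists (\sum_i (x i == 1%R : nat))%N; rewrite natr_sum.
by apply: eq_bigr => i _; case: (x01 i) => ->; rewrite ?eqxx // eq_sym oner_eq0.
Qed.

Section real_probability.
Context d (T : measurableType d) (R : realType) (P : probability T R).

Definition pr (A : set T) : R := fine (P A).

Lemma prE A : measurable A -> P A = (pr A)%:E.
Proof. by move=> mA; rewrite /pr fineK // fin_num_measure. Qed.

Lemma pr_le1 A : measurable A -> pr A <= 1.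
Proof. by move=> mA; rewrite -lee_fin -prE // probability_le1. Qed.

Lemma le_pr A B : measurable A -> measurable B -> A `<=` B -> pr A <= pr B.
Proof. by move=> mA mB AB; rewrite -lee_fin -!prE // le_measure // inE. Qed.

Lemma prU A B : measurable A -> measurable B -> A `&` B = set0 ->
  pr (A `|` B) = pr A + pr B.
Proof.
move=> mA mB AB; apply: EFin_inj.
by rewrite EFinD -!prE ?measureU //; exact: measurableU.
Qed.

Lemma prD A B : measurable A -> measurable B -> B `<=` A ->
  pr (A `\` B) = pr A - pr B.
Proof.
move=> mA mB BA; have := prU (measurableD mA mB) mB.
by rewrite setDKU // setIC setDIK => ->; [ring|].
Qed.

Lemma prT : pr setT = 1.
Proof. by rewrite /pr probability_setT. Qed.

Lemma prC A : measurable A -> pr (~` A) = 1 - pr A.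
Proof. by move=> mA; rewrite -prT -prD // setTD. Qed.

Lemma pr0 : pr set0 = 0.
Proof. by rewrite /pr measure0. Qed.

Definition indic_rv (A : set T) (mA : measurable A) : {RV P >-> R} :=
  indic_mfun A mA.

Lemma cdf_indic_rv A (mA : measurable A) x :
  cdf (indic_rv mA) x = (bernoulli_cdf (pr A) x)%:E.
Proof.
rewrite /cdf /distribution /pushforward /bernoulli_cdf.
have [x_lt0|x_ge0] := ltP x 0.
  rewrite (_ : _ @^-1` _ = set0) ?measure0 //.
  apply/seteqP; split => w //=; rewrite in_itv /= mindicE.
  by case: (w \in A) => /=; lra.
have [x_lt1|x_ge1] := ltP x 1.
  rewrite (_ : _ @^-1` _ = ~` A).
    by rewrite prE ?prC //; exact: measurableC.
  apply/seteqP; split => w /=; rewrite in_itv /= mindicE.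
    case: (boolP (w \in A)) => [_ /= x1 _|wA _ /mem_set]; last exact/negP.
    by move: x1; rewrite mulr1n; lra.
  by move=> nA; rewrite memNset //=; lra.
rewrite (_ : _ @^-1` _ = setT) ?probability_setT //.
apply/seteqP; split => w //= _; rewrite in_itv /= mindicE.
by case: (w \in A) => /=; lra.
Qed.

Lemma measurable_preimage_itv (X : {RV P >-> R}) (i : interval R) :
  measurable (X @^-1` [set x | x \in i]).
Proof. by apply: measurable_funPTI; exact: measurable_itv. Qed.

Lemma cdf_prE (X : {RV P >-> R}) r : cdf X r = (pr (X @^-1` `]-oo, r]))%:E.
Proof.
rewrite /cdf /distribution /pushforward prE //.
exact: measurable_preimage_itv.
Qed.

Lemma pr_itv_oc (X : {RV P >-> R}) a b : a <= b ->
  pr (X @^-1` `]a, b]) = pr (X @^-1` `]-oo, b]) - pr (X @^-1` `]-oo, a]).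
Proof.
move=> ab; rewrite -prD; try exact: measurable_preimage_itv.
  congr pr; apply/seteqP; split => w /=; rewrite !in_itv /= -?ltNge.
    by move=> /andP[aw wb]; split => //; apply/negP; rewrite -ltNge.
  by move=> [wb /negP]; rewrite -ltNge => ->.
by move=> w /=; rewrite !in_itv /= => /le_trans; apply.
Qed.

Lemma ae_not_of_pr0 (N : set T) : measurable N -> pr N = 0 ->
  {ae P, forall w, ~ N w}.
Proof.
by move=> mN N0; exists N; rewrite prE // N0; split => // w /= /contrapT.
Qed.

Lemma ae_of_pr1 (A : set T) : measurable A -> P A = 1%E ->
  {ae P, forall w, A w}.
Proof.
move=> mA PA1; exists (~` A); split => //; first exact: measurableC.
by rewrite probability_setC // PA1 subee.
Qed.

Lemma ae_exists (Q : T -> Prop) : {ae P, forall w, Q w} -> exists w, Q w.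
Proof.
have PT0 : (0 < P setT)%E by rewrite probability_setT lte01.
exact: (@filter_ex _ _ (ae_properfilter_algebraOfSetsType PT0)).
Qed.

Lemma pr_le_bernoulli (X : {RV P >-> R}) p r :
  (forall x, cdf X x = (bernoulli_cdf p x)%:E) ->
  pr (X @^-1` `]-oo, r]) = bernoulli_cdf p r.
Proof. by move=> cdfX; apply: EFin_inj; rewrite -cdf_prE. Qed.

Lemma bernoulli_cdf_ae01 (X : {RV P >-> R}) p :
  (forall x, cdf X x = (bernoulli_cdf p x)%:E) ->
  {ae P, forall w, X w = 0 \/ X w = 1}.
Proof.
move=> /pr_le_bernoulli F.
have null_ae (i : interval R) : pr (X @^-1` [set x | x \in i]) = 0 ->
    {ae P, forall w, X w \notin i}.
  move=> i0; apply: filterS (ae_not_of_pr0 (measurable_preimage_itv X i) i0).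
  by move=> w /negP.
have neg m : pr (X @^-1` `]-oo, - m.+1%:R^-1]) = 0.
  by rewrite F /bernoulli_cdf oppr_lt0 invr_gt0 ltr0Sn.
have mid m : pr (X @^-1` `]0, 1 - m.+1%:R^-1]) = 0.
  have m1 : m.+1%:R^-1 <= 1 :> R by rewrite invf_le1 ?ltr0Sn // ler1n.
  have u_gt0 : 0 < m.+1%:R^-1 :> R by rewrite invr_gt0.
  rewrite pr_itv_oc ?subr_ge0 // !F /bernoulli_cdf ltxx ltr01.
  by rewrite ltNge subr_ge0 m1 /= gtrDl oppr_lt0 u_gt0 subrr.
have big : pr (X @^-1` `]1, +oo[) = 0.
  rewrite (_ : _ @^-1` _ = ~` (X @^-1` `]-oo, 1])); last first.
    by apply/seteqP; split => w /=; rewrite !in_itv /= andbT ltNge => /negP.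
  rewrite prC ?F; last exact: measurable_preimage_itv.
  by rewrite /bernoulli_cdf ltr10 ltxx subrr.
apply: filterS3 (ae_foralln (fun m => null_ae _ (neg m)))
  (ae_foralln (fun m => null_ae _ (mid m))) (null_ae _ big).
by move=> w; exact: eq0_or_eq1_of_notin.
Qed.

Lemma sum_pr_of_ae_sum_indic n (A : 'I_n -> set T) c :
  (forall i, measurable (A i)) ->
  {ae P, forall w, \sum_(i < n) \1_(A i) w = c} -> \sum_(i < n) pr (A i) = c.
Proof.
move=> mA sum_c; apply: EFin_inj.
transitivity (\int[P]_w (\sum_(i < n) \1_(A i) w)%:E)%E.
  under eq_integral do rewrite -sumEFin.
  rewrite -sumEFin ge0_integral_sum //.
    by apply: eq_bigr => i _; rewrite integral_indic // setIT -prE.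
  by move=> i; apply/measurable_EFinP; exact: measurable_indic.
rewrite (ae_eq_integral (cst c%:E)) //.
- rewrite integral_cst // -[RHS]mule1; congr (_ * _)%E; exact: probability_setT.
- apply/measurable_EFinP; apply: measurable_sum => i.
  exact: measurable_indic.
- by apply: filterS sum_c => w <- _.
Qed.

Lemma bernoulli_mixable_sum_int n (p : 'I_n -> R) :
  jointly_mixable P (fun i => bernoulli_cdf (p i)) ->
  exists k : int, \sum_(i < n) p i = k%:~R.
Proof.
case=> X [cdfX [c sum_c]].
have mS : measurable [set w | \sum_(i < n) X i w = c].
  have mX : measurable_fun setT (fun w => \sum_(i < n) X i w).
    by apply: measurable_sum => i; exact: measurable_funP.
  by have := mX measurableT _ (measurable_set1 c); rewrite setTI.
have sum_ae : {ae P, forall w, \sum_(i < n) X i w = c} := ae_of_pr1 mS sum_c.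
have X01 : {ae P, forall w i, X i w = 0 \/ X i w = 1}.
  by apply: filter_forall => i; exact: bernoulli_cdf_ae01 (cdfX i).
have X01_sum : {ae P, forall w,
    (forall i, X i w = 0 \/ X i w = 1) /\ \sum_(i < n) X i w = c}.
  by apply: filterS2 X01 sum_ae => w ? ?; split.
have [w [w01 wc]] := ae_exists X01_sum.
have [k ck] := sum01_nat w01.
exists k; rewrite -[k%:~R]/(k%:R) -ck wc.
pose A i := ~` (X i @^-1` `]-oo, 0]).
have mA i : measurable (A i).
  by apply: measurableC; exact: measurable_preimage_itv.
have prA i : pr (A i) = p i.
  rewrite prC ?(pr_le_bernoulli _ (cdfX i)) //; last first.
    exact: measurable_preimage_itv.
  by rewrite /bernoulli_cdf ltxx ltr01 subKr.
transitivity (\sum_(i < n) pr (A i)).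
  by apply: eq_bigr => i _; rewrite prA.
apply: sum_pr_of_ae_sum_indic => //.
apply: filterS2 X01 sum_ae => v v01 <-; apply: eq_bigr => i _.
case: (v01 i) => Xv; rewrite indicE in_setC Xv.
  by rewrite mem_set //= in_itv /= Xv.
by rewrite memNset //= in_itv /= Xv ler10.
Qed.

Lemma pr_bigcup_le (D : nat -> set T) t :
  (forall m, measurable (D m)) -> nondecreasing_seq D ->
  (forall m, pr (D m) <= t) -> pr (\bigcup_m D m) <= t.
Proof.
move=> mD ndD Dt; have mU := bigcupT_measurable _ mD.
have cvD := nondecreasing_cvg_mu (mu := P) mD mU ndD.
rewrite -lee_fin -prE // -(cvg_lim _ cvD) //.
apply: lime_le; first exact: cvgP cvD.
by apply: nearW => m /=; rewrite prE // lee_fin.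
Qed.

Lemma near_max_subset F s : 0 <= s -> exists B,
  [/\ measurable B, B `<=` F, pr B <= s &
      forall C, measurable C -> C `<=` F -> pr C <= s -> pr C <= 2 * pr B].
Proof.
move=> s0.
pose S := [set x | exists C, [/\ measurable C, C `<=` F, pr C <= s & x = pr C]].
have supS : has_sup S.
  split; first by exists 0, set0; rewrite pr0; split.
  by exists 1 => _ [C [mC _ _ ->]]; exact: pr_le1.
have ubS C : measurable C -> C `<=` F -> pr C <= s -> pr C <= sup S.
  by move=> mC CF Cs; apply: sup_upper_bound => //; exists C.
have [supS_le0|supS_gt0] := lerP (sup S) 0.
  exists set0; rewrite pr0 mulr0; split => // C mC CF Cs.
  exact: le_trans (ubS C mC CF Cs) supS_le0.
have supS2_gt0 : 0 < sup S / 2 by rewrite divr_gt0.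
have [_ [B [mB BF Bs ->]] supB] := sup_adherent supS2_gt0 supS.
exists B; split => // C mC CF Cs.
by have := ubS C mC CF Cs; lra.
Qed.

Lemma indic_disjU (A B : set T) w : A `&` B = set0 ->
  \1_(A `|` B) w = \1_A w + \1_B w :> R.
Proof.
move=> AB0; rewrite !indicE in_setU.
have [wA|wA] := boolP (w \in A); have [wB|wB] := boolP (w \in B).
- have : (A `&` B) w by split; exact: set_mem.
  by rewrite AB0.
- by rewrite addr0.
- by rewrite add0r.
- by rewrite addr0.
Qed.

Section atomless.
Hypothesis hP : atomless P.

Lemma atomless_half C : measurable C -> 0 < pr C ->
  exists B, [/\ measurable B, B `<=` C, 0 < pr B & pr B <= pr C / 2].
Proof.
move=> mC C0; have PC0 : (0 < P C)%E by rewrite prE.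
have [B [mB BC]] := hP mC PC0; rewrite !prE // !lte_fin => /andP[B0 BC'].
have [Bhalf|Bhalf] := lerP (pr B) (pr C / 2); first by exists B.
exists (C `\` B); rewrite prD //; split => //; first exact: measurableD.
- by rewrite subr_gt0.
- by rewrite lerBlDl -lerBlDr; lra.
Qed.

Lemma atomless_small A e : measurable A -> 0 < pr A -> 0 < e ->
  exists C, [/\ measurable C, C `<=` A, 0 < pr C & pr C <= e].
Proof.
move=> mA A0 e0.
have halves m : exists B,
    [/\ measurable B, B `<=` A, 0 < pr B & pr B <= pr A / 2 ^+ m].
  elim: m => [|m [B [mB BA B0 Bm]]].
    by exists A; rewrite expr0 divr1; split.
  have [B' [mB' B'B B'0 B'half]] := atomless_half mB B0.
  exists B'; split => //; first exact: subset_trans B'B BA.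
  apply: le_trans B'half _.
  by rewrite exprSr invfM mulrA ler_wpM2r // invr_ge0.
pose m := Num.Def.archi_bound e^-1.
have em : e^-1 < m%:R by apply: archi_boundP; rewrite invr_ge0 ltW.
have [C [mC CA C0 Cm]] := halves m.
exists C; split => //; apply: le_trans Cm _.
have m2 : (m%:R : R) <= 2 ^+ m by rewrite -natrX ler_nat ltnW // ltn_expl.
rewrite ler_pdivrMr ?exprn_gt0 //; apply: le_trans (pr_le1 mA) _.
by rewrite -ler_pdivrMl // mulr1 (le_trans (ltW em)).
Qed.

(* Sierpinski: grow [D] greedily by near-maximal admissible pieces; if the
   union fell short of [t], a small set of positive measure in the remainder
   would be admissible at every stage, forcing the pieces, hence [pr D m],
   to grow linearly in [m]. *)
Lemma atomless_sierpinski E t : measurable E -> 0 <= t <= pr E ->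
  exists D, [/\ measurable D, D `<=` E & pr D = t].
Proof.
move=> mE /andP[t0 tE].
have next_ex (D : set T) : exists B, pr D <= t ->
    [/\ measurable B, B `<=` E `\` D, pr D + pr B <= t &
        forall C, measurable C -> C `<=` E `\` D -> pr D + pr C <= t ->
          pr C <= 2 * pr B].
  have [Dt|] := lerP (pr D) t; last by exists set0.
  have sD : 0 <= t - pr D by rewrite subr_ge0.
  have [B [mB BF Bs Bmax]] := near_max_subset (E `\` D) sD.
  exists B => _; split => //; first by rewrite -lerBrDl.
  by move=> C mC CF DCt; apply: Bmax => //; rewrite lerBrDl.
have [next next_spec] := choice next_ex.
pose D := fix D m := if m is m'.+1 then D m' `|` next (D m') else set0.
have next_disj X : pr X <= t -> X `&` next X = set0.
  move=> Xt; have [_ XE _ _] := next_spec X Xt.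
  by rewrite setIC; apply/disjoints_subset => x /XE[].
have D_spec m : [/\ measurable (D m), D m `<=` E & pr (D m) <= t].
  elim: m => [|m [mDm DmE Dmt]] /=; first by rewrite pr0; split.
  have [mB BE Bt _] := next_spec _ Dmt.
  split; [exact: measurableU | by move=> x [/DmE|/BE[]] | ].
  by rewrite prU // next_disj.
have prDS m : pr (D m.+1) = pr (D m) + pr (next (D m)).
  have [mDm _ Dmt] := D_spec m.
  by rewrite prU ?next_disj //; case: (next_spec _ Dmt).
have mD m : measurable (D m) by case: (D_spec m).
have DE m : D m `<=` E by case: (D_spec m).
pose Dinf := \bigcup_m D m.
have mDinf : measurable Dinf by exact: bigcupT_measurable.
have DDinf m : D m `<=` Dinf by move=> x Dmx; exists m.
have Dinft : pr Dinf <= t.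
  apply: pr_bigcup_le => // [|m]; last by case: (D_spec m).
  by apply/nondecreasing_seqP => m; apply/subsetPset => x Dx; left.
exists Dinf; split => //; first by move=> x [m _ /DE].
apply/eqP; rewrite eq_le Dinft leNgt; apply/negP => Dinf_lt.
have rest_gt0 : 0 < pr (E `\` Dinf).
  by rewrite prD // ?subr_gt0 ?(lt_le_trans Dinf_lt) // => x [m _ /DE].
have gap_gt0 : 0 < t - pr Dinf by rewrite subr_gt0.
have [C [mC CE C0 Ct]] :=
  atomless_small (measurableD mE mDinf) rest_gt0 gap_gt0.
have C_small m : pr C <= 2 * pr (next (D m)).
  have [_ _ Dmt] := D_spec m; have [_ _ _ next_max] := next_spec _ Dmt.
  apply: next_max => //; first by move=> x /CE[xE xDinf]; split => // /DDinf.
  by have := le_pr (mD m) mDinf (DDinf m); lra.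
have grow m : m%:R * pr C <= 2 * pr (D m).
  elim: m => [|m IH]; first by rewrite mul0r pr0 mulr0.
  by rewrite prDS -natr1 mulrDl mul1r; have := C_small m; lra.
pose m := Num.Def.archi_bound (2 / pr C).
have : 2 / pr C < m%:R by apply: archi_boundP; rewrite divr_ge0 // ltW.
rewrite ltr_pdivrMr //; have := grow m; have := pr_le1 (mD m); lra.
Qed.

(* If x + y <= 1, split A; otherwise take B := A `|` D and C := ~` D for some
   D included in ~` A with pr D = 1 - y. *)
Lemma atomless_split A (x y : R) : measurable A -> 0 <= x <= 1 -> 0 <= y <= 1 ->
  pr A = x + y - (1 < x + y)%R%:R ->
  exists B C, [/\ measurable B, measurable C, pr B = x, pr C = y &
    forall w, \1_B w + \1_C w = (1 < x + y)%R%:R + \1_A w :> R].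
Proof.
move=> mA /andP[x0 x1] /andP[y0 y1].
have [xy_gt1|xy_le1] := ltrP 1 (x + y); rewrite ?mulr1n ?mulr0n => prA.
- have y_range : 0 <= 1 - y <= pr (~` A).
    by rewrite prC // prA; apply/andP; split; lra.
  have [D [mD DA prDt]] := atomless_sierpinski (measurableC mA) y_range.
  have AD0 : A `&` D = set0 by rewrite setIC; apply/disjoints_subset.
  exists (A `|` D), (~` D); split.
  + exact: measurableU.
  + exact: measurableC.
  + by rewrite prU // prA prDt; lra.
  + by rewrite prC // prDt; lra.
  + move=> w; rewrite indic_disjU // -addrA -indic_disjU ?setICr //.
    by rewrite setUv indicT addrC.
- have x_range : 0 <= x <= pr A by rewrite prA; apply/andP; split; lra.
  have [D [mD DA prDt]] := atomless_sierpinski mA x_range.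
  exists D, (A `\` D); split.
  + by [].
  + exact: measurableD.
  + by [].
  + by rewrite prD // prA prDt; lra.
  + move=> w; rewrite add0r addrC -indic_disjU ?setDKU //.
    by rewrite setIC setDIK.
Qed.

Lemma atomless_sets_of_int_sum n (q : nat -> R) (k : int) :
  (forall j, (j <= n)%N -> 0 <= q j <= 1) -> \sum_(j < n.+1) q j = k%:~R ->
  exists A : nat -> set T,
    (forall j, (j <= n)%N -> measurable (A j) /\ pr (A j) = q j) /\
    forall w, \sum_(j < n.+1) \1_(A j) w = k%:~R :> R.
Proof.
elim: n q k => [|n IH] q k q01.
  rewrite big_ord1 => q0k.
  have /andP[k0 k1] := q01 0%N isT; rewrite q0k ler0z lerz1 in k0 k1.
  have [k_eq|k_eq] : k = 0 \/ k = 1 by lia.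
  - exists (fun=> set0); split => [j|w]; last by rewrite big_ord1 indic0 k_eq.
    by rewrite leqn0 => /eqP ->; rewrite pr0 q0k k_eq.
  - exists (fun=> setT); split => [j|w]; last by rewrite big_ord1 indicT k_eq.
    by rewrite leqn0 => /eqP ->; rewrite prT q0k k_eq.
rewrite 2!big_ord_recl => sum_q.
have {}sum_q : q 0%N + q 1%N + \sum_(i < n) q i.+2 = k%:~R.
  by rewrite -sum_q addrA.
(* [e] is a nat: on bool, [- e] would be negation in the group (bool, xor) *)
pose e : nat := (1 < q 0%N + q 1%N)%R.
pose q' j := if j is j'.+1 then q j'.+2 else q 0%N + q 1%N - e%:R.
have q'01 j : (j <= n)%N -> 0 <= q' j <= 1.
  case: j => [|j] jn /=; last exact: q01.
  have /andP[? ?] := q01 0%N isT; have /andP[? ?] := q01 1%N isT.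
  by rewrite /e; case: ltrP => ? /=; rewrite ?mulr1n ?mulr0n;
    apply/andP; split; lra.
have sum_q' : \sum_(j < n.+1) q' j = (k - e%:Z)%:~R.
  rewrite big_ord_recl (eq_bigr (fun i : 'I_n => q i.+2)) // intrB -sum_q /=.
  ring.
have [A' [A'spec sumA']] := IH q' (k - e%:Z) q'01 sum_q'.
have [mA'0 prA'0] := A'spec 0%N isT.
have [B [C [mB mC prB prC BC]]] :=
  atomless_split mA'0 (q01 0%N isT) (q01 1%N isT) prA'0.
exists (fun j => match j with 0 => B | 1 => C | j.+2 => A' j.+1 end); split.
  by case=> [|[|j]] jn //; exact: A'spec j.+1 jn.
move=> w; have := sumA' w; rewrite big_ord_recl => sumA'w.
by rewrite 2!big_ord_recl addrA BC -addrA sumA'w intrB; ring.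
Qed.

Lemma bernoulli_mixable_of_sum_int n (p : 'I_n -> R) (k : int) :
  (forall i, 0 <= p i <= 1) -> \sum_(i < n) p i = k%:~R ->
  jointly_mixable P (fun i => bernoulli_cdf (p i)).
Proof.
case: n p => [|n] p p01 sum_p.
  exists (fun=> indic_rv measurable0); split => [[]//|].
  exists 0; rewrite (_ : [set w | _] = setT) ?probability_setT //.
  by apply/seteqP; split => w // _; rewrite /= big_ord0.
pose q j := p (inord j).
have q01 j : (j <= n)%N -> 0 <= q j <= 1 by move=> _; exact: p01.
have sum_q : \sum_(j < n.+1) q j = k%:~R.
  by rewrite -sum_p; apply: eq_bigr => i _; rewrite /q inord_val.
have [A [A_spec sumA]] := atomless_sets_of_int_sum q01 sum_q.
have mA (i : 'I_n.+1) : measurable (A i) by case: (A_spec i (ltn_ord i)).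
exists (fun i => indic_rv (mA i)); split.
  move=> i x; rewrite cdf_indic_rv.
  by case: (A_spec i (ltn_ord i)) => _ ->; rewrite /q inord_val.
exists k%:~R; rewrite (_ : [set w | _] = setT) ?probability_setT //.
by apply/seteqP; split => w // _; rewrite /= -(sumA w).
Qed.

End atomless.
End real_probability.

Unset Implicit Arguments.

Theorem proposition21 (d : measure_display) (T : measurableType d) (R : realType)
  (P : probability T R) (hP : atomless P) (n : nat) (p : 'I_n -> R)
  (hp : forall i, 0 <= p i <= 1) :
  jointly_mixable P (fun i => bernoulli_cdf (p i)) <->
  exists k : int, \sum_(i < n) p i = k%:~R.
Proof.
split; first exact: bernoulli_mixable_sum_int.
by move=> [k sum_p]; exact: (bernoulli_mixable_of_sum_int hP hp sum_p).
Qed.
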